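(* Let $q\in(0,1]$. Assume: [A5] there exists $\lambda>0$ with $\lim_{x\to0}p(x)/|x|^q=\lambda$; [A7] for every $M>0$, $\sup_{u,v\in\mathbb U_T,\ |u|,|v|<M,\ u\neq v}\frac{|\mathbb H_T(\theta^*+a_Tu)-\mathbb H_T(\theta^*+a_Tv)|}{|u-v|^q}\|G_T^{(00)}\|^q\to0$ in probability as $T\to\infty$. If $\hat u_T=a_T^{-1}(\hat\theta_T-\theta^* )=O_p(1)$ as $T\to\infty$, then $$P\bigl(\hat\theta_T^{(0)}=0\bigr)\to1\quad\text{as }T\to\infty.$$
   Context: Let $\Theta\subset\mathbb R^{\mathsf p}$ be a bounded open set with closure $\overline\Theta$ and $\theta^*\in\Theta$. Let $(\Omega,\mathcal F,P)$ be a probability space, $\mathbb T\subset\mathbb R_{\ge0}$ with $\sup\mathbb T=\infty$; limits $T\to\infty$ are along $\mathbb T$. For each $T\in\mathbb T$, $\mathbb H_T:\Omega\times\overline\Theta\to\mathbb R$ is a random field continuous in $\theta$ for every $\omega$. The penalty is $p_T(\theta)=\sum_{j=1}^{\mathsf p}\xi_T^jp(\theta_j)$ with (possibly random) $\xi_T^j>0$ and $p:\mathbb R\to\mathbb R_{\ge0}$, $p(0)=0$; $\mathbb H^\dagger_T=\mathbb H_T-p_T$, and $\hat\theta_T:\Omega\to\overline\Theta$ is measurable with $\mathbb H^\dagger_T(\hat\theta_T)=\max_{\theta\in\overline\Theta}\mathbb H^\dagger_T(\theta)$. $\mathcal J^{(0)}=\{j:\theta^*_j=0\}$, $\mathcal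 J^{(1)}=\{j:\theta^*_j\ne0\}$; for $x\in\mathbb R^{\mathsf p}$, $x^{(0)}=(x_j)_{j\in\mathcal J^{(0)}}$, and for a matrix $A$, $A^{(00)}=(A_{ij})_{i,j\in\mathcal J^{(0)}}$. $a_T=\mathrm{diag}(\alpha_T^1,\dots,\alpha_T^{\mathsf p})$ is deterministic, invertible, with $\|a_T\|\to0$ ($\|\cdot\|$ the spectral norm). $\mathbb U_T=\{u:\theta^*+a_Tu\in\overline\Theta\}$. $\tilde a_T$ is diagonal with $(\tilde a_T)_{jj}=(\xi_T^j)^{-1/q}$ for $j\in\mathcal J^{(0)}$ and $\alpha_T^j$ for $j\in\mathcal J^{(1)}$; $G_T=a_T^{-1}\tilde a_T$. $X_T=O_p(1)$ means: for every $\epsilon>0$ there exist $\mathcal T\in\mathbb T$, $M>0$ with $P(|X_T|>M)<\epsilon$ for all $T\ge\mathcal T$. *)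

From HB Require Import structures.
From mathcomp Require Import all_boot all_order all_algebra.
From mathcomp Require Import all_classical all_reals all_analysis.
Set Implicit Arguments. Unset Strict Implicit. Unset Printing Implicit Defensive.
Import Order.TTheory GRing.Theory Num.Theory.
Import numFieldNormedType.Exports.
Local Open Scope classical_set_scope.
Local Open Scope ring_scope.

Section Defs.
Variable R : realType.

Definition enorm n (x : 'cV[R]_n) : R := Num.sqrt (\sum_(i < n) x i 0 ^+ 2).

Definition specnorm m n (A : 'M[R]_(m, n)) : R :=
  sup [set enorm (A *m x) | x in [set x : 'cV[R]_n | enorm x <= 1]].

Definition subJJ n (J : {set 'I_n}) (A : 'M[R]_n) : 'M[R]_(#|J|) :=
  \matrix_(i, j) A (enum_val i) (enum_val j).

Definition cvgT (TT : set R) (f : R -> R) (l : R) : Prop :=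
  forall e : R, 0 < e -> exists T0 : R,
    forall T, TT T -> T0 <= T -> `|f T - l| < e.

Definition outerP d (Omega : measurableType d) (P : probability Omega R)
  (A : set Omega) : \bar R :=
  ereal_inf [set P B | B in [set B | measurable B /\ A `<=` B]].

Definition cvg0_inprob d (Omega : measurableType d) (P : probability Omega R)
  (TT : set R) (X : R -> Omega -> \bar R) : Prop :=
  forall eps : R, 0 < eps -> forall delta : R, 0 < delta ->
    exists T0 : R, forall T, TT T -> T0 <= T ->
      (outerP P [set w | (eps%:E <= `|X T w|)%E] < delta%:E)%E.

Definition Op1 d (Omega : measurableType d) (P : probability Omega R)
  (TT : set R) (X : R -> Omega -> R) : Prop :=
  forall eps : R, 0 < eps -> exists T0 : R, TT T0 /\ exists M : R, 0 < M /\
    forall T, TT T -> T0 <= T -> (P [set w | (M < `|X T w|)%R] < eps%:E)%E.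

End Defs.

(* Suppose theta^*_j = 0 but theta_hat_j <> 0.  Zeroing the j-th coordinate of
   u_hat gives a competitor theta' that still lies in Theta, because a_T -> 0 and
   u_hat = O_p(1) keep theta_hat in a small ball around theta^*; its penalty is
   smaller by xi_j p(theta_hat_j), so maximality of theta_hat gives
   xi_j p(theta_hat_j) <= |H(theta_hat) - H(theta')|.  As theta_hat_j is small,
   [A5] gives p(theta_hat_j) > (lambda/2) |theta_hat_j|^q, and since
   alpha_j G_jj = xi_j^(-1/q) this says exactly that the ratio of [A7] at the pair
   (u_hat, u_hat with coordinate j zeroed) exceeds lambda/2.  So on the event
   theta_hat^(0) <> 0 either u_hat is large or the supremum of [A7] is at least
   lambda/2, and both events have small probability. *)

From HB Require Import structures.
From mathcomp Require Import all_boot all_order all_algebra.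
From mathcomp Require Import all_classical all_reals all_analysis.
From mathcomp Require Import measurable_realfun ring lra.
Import Order.TTheory GRing.Theory Num.Theory.
Import numFieldNormedType.Exports.
Set Implicit Arguments. Unset Strict Implicit. Unset Printing Implicit Defensive.
Local Open Scope classical_set_scope.
Local Open Scope ring_scope.

Section EuclideanNorm.
Variables (R : realType) (n : nat).
Implicit Types u v : 'cV[R]_n.

Lemma enorm_ge0 v : 0 <= enorm v.
Proof. exact: sqrtr_ge0. Qed.

Lemma normr_coord_le_enorm v i : `|v i 0| <= enorm v.
Proof.
rewrite /enorm -sqrtr_sqr ler_sqrt; last by apply: sumr_ge0 => k _; exact: sqr_ge0.
by rewrite (bigD1 i) //= lerDl; apply: sumr_ge0 => k _; exact: sqr_ge0.
Qed.

Lemma enorm_supp1 v j : (forall i, i != j -> v i 0 = 0) -> enorm v = `|v j 0|.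
Proof.
move=> vj0; rewrite /enorm (bigD1 j) //= big1 ?addr0 ?sqrtr_sqr //.
by move=> i /vj0 ->; rewrite expr0n.
Qed.

Lemma ler_enorm u v : (forall i, `|u i 0| <= `|v i 0|) -> enorm u <= enorm v.
Proof.
move=> uv; rewrite /enorm ler_sqrt; last by apply: sumr_ge0 => k _; exact: sqr_ge0.
apply: ler_sum => i _; rewrite -[u i 0 ^+ 2]real_normK ?num_real //.
by rewrite -[v i 0 ^+ 2]real_normK ?num_real // lerXn2r ?nnegrE.
Qed.

Definition zero_coord j v : 'cV[R]_n := \col_i (if i == j then 0 else v i 0).

Lemma enorm_sub_zero_coord v j : enorm (v - zero_coord j v) = `|v j 0|.
Proof.
rewrite (enorm_supp1 (j := j)); first by rewrite !mxE eqxx subr0.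
by move=> i /negbTE ij; rewrite !mxE ij subrr.
Qed.

Lemma enorm_zero_coord_le v j : enorm (zero_coord j v) <= enorm v.
Proof. by apply: ler_enorm => i; rewrite mxE; case: ifP; rewrite ?normr0. Qed.

End EuclideanNorm.

Section SpectralNorm.
Variable R : realType.

Lemma specnorm_has_ubound m n (A : 'M[R]_(m, n)) :
  has_ubound [set enorm (A *m x) | x in [set x : 'cV[R]_n | enorm x <= 1]].
Proof.
exists (Num.sqrt (\sum_(i < m) (\sum_(k < n) `|A i k|) ^+ 2)).
move=> _ [x /= x_le1 <-]; rewrite /enorm ler_sqrt; last first.
  by apply: sumr_ge0 => k _; exact: sqr_ge0.
apply: ler_sum => i _; rewrite -[_ ^+ 2]real_normK ?num_real //.
rewrite lerXn2r ?nnegrE ?sumr_ge0 //.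
rewrite mxE; apply: (le_trans (ler_norm_sum _ _ _)); apply: ler_sum => k _.
rewrite normrM ler_piMr //.
exact: le_trans (normr_coord_le_enorm x k) x_le1.
Qed.

Lemma normr_entry_le_specnorm m n (A : 'M[R]_(m, n)) i k : `|A i k| <= specnorm A.
Proof.
have ek1 : enorm (delta_mx k 0 : 'cV[R]_n) = 1.
  rewrite (enorm_supp1 (j := k)); first by rewrite mxE !eqxx normr1.
  by move=> i' /negbTE ik; rewrite mxE ik.
apply: le_trans (ub_le_sup (specnorm_has_ubound A) _); last first.
  by exists (delta_mx k 0) => //=; rewrite ek1.
apply: le_trans (normr_coord_le_enorm _ i).
rewrite !mxE (bigD1 k) //= big1 ?addr0; first by rewrite mxE !eqxx mulr1.
by move=> k' /negbTE kk'; rewrite mxE kk' mulr0.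
Qed.

Lemma normr_diag_le_specnorm_subJJ n (J : {set 'I_n}) (A : 'M[R]_n) j :
  j \in J -> `|A j j| <= specnorm (subJJ J A).
Proof.
move=> jJ; pose k := enum_rank_in jJ j.
by have := normr_entry_le_specnorm (subJJ J A) k k; rewrite mxE enum_rankK_in.
Qed.

Lemma is_diag_mulmxE m n (a : 'M[R]_m) (B : 'M[R]_(m, n)) i k :
  is_diag_mx a -> (a *m B) i k = a i i * B i k.
Proof.
move=> /is_diag_mxP a_diag; rewrite mxE (bigD1 i) //= big1 ?addr0 //.
by move=> i' i'i; rewrite a_diag ?mul0r // eq_sym.
Qed.

End SpectralNorm.

Section Localization.
Variable R : realType.

Lemma dnbhs0_gt (f : R -> R) (l m : R) :
  f x @[x --> (0 : R)^'] --> l -> m < l ->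
  exists2 d : R, 0 < d & forall x, x != 0 -> `|x| < d -> m < f x.
Proof.
move=> fl ml.
have /nbhs_ballP [d d0 dP] : \forall x \near (0 : R)^', m < f x.
  exact: cvgr_gt _ fl _ ml.
exists d => // x x0 xd; apply: dP x0.
by rewrite /ball /= sub0r normrN.
Qed.

Lemma open_coord_ball p (Theta : set 'cV[R]_p) th : open Theta -> Theta th ->
  exists2 r : R, 0 < r &
    forall y : 'cV[R]_p, (forall i, `|y i 0 - th i 0| < r) -> Theta y.
Proof.
move=> oTheta Theta_th.
have /nbhs_ballP [r r0 rP] : nbhs th Theta by exact: open_nbhs_nbhs.
exists r => // y yr; apply: rP; split => // i j.
by rewrite (ord1 j) /ball /= -normrN opprB.
Qed.

End Localization.

Section PenaltyBounds.
Variable R : realType.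

Lemma powR_ratio_rescale (q s c x y g : R) : 0 < q -> 0 < s ->
  x != 0 -> y != 0 -> x * g = s `^ (- q^-1) ->
  c / `|x * y| `^ q = s * c / `|y| `^ q * `|g| `^ q.
Proof.
move=> q0 s0 x0 y0 xg.
have xq0 : 0 < `|x| `^ q by rewrite powR_gt0 ?normr_gt0.
have yq0 : 0 < `|y| `^ q by rewrite powR_gt0 ?normr_gt0.
have gq : `|g| `^ q = s^-1 / `|x| `^ q.
  apply: (mulIf (lt0r_neq0 xq0)); rewrite mulfVK ?lt0r_neq0 //.
  rewrite -powRM // mulrC -normrM xg ger0_norm ?powR_ge0 //.
  by rewrite -powRrM mulNr mulVf ?lt0r_neq0 // powR_inv1 // ltW.
rewrite gq normrM powRM //; field.
by rewrite !lt0r_neq0.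
Qed.

Lemma pen_le_fit_diff_zero_coord p (H : 'cV[R]_p -> R) (xi : 'I_p -> R)
    (pen : R -> R) (th th' : 'cV[R]_p) j :
  pen 0 = 0 ->
  H th' - \sum_(i < p) xi i * pen (th' i 0) <=
    H th - \sum_(i < p) xi i * pen (th i 0) ->
  th' j 0 = 0 -> (forall i, i != j -> th' i 0 = th i 0) ->
  xi j * pen (th j 0) <= `|H th - H th'|.
Proof.
move=> pen0 + th'j th'i.
rewrite [\sum_(i < p) xi i * pen (th' i 0)](bigD1 j) //=.
rewrite [\sum_(i < p) xi i * pen (th i 0)](bigD1 j) //= th'j pen0 mulr0 add0r.
have -> : \sum_(i < p | i != j) xi i * pen (th' i 0) =
          \sum_(i < p | i != j) xi i * pen (th i 0).
  by apply: eq_bigr => i ij; rewrite th'i.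
by move=> th_max; apply: le_trans (ler_norm _); lra.
Qed.

End PenaltyBounds.

Section Measurability.
Variables (R : realType) (d : measure_display) (Omega : measurableType d) (p : nat).
Implicit Types f : Omega -> 'cV[R]_p.

Lemma measurable_fun_affine_coord f (B : 'M[R]_p) (c : 'cV[R]_p) i :
  (forall j, measurable_fun setT (fun w => f w j 0)) ->
  measurable_fun setT (fun w => (B *m (f w - c)) i 0).
Proof.
move=> mf; under eq_fun do rewrite mxE.
apply: measurable_sum => k; under eq_fun do rewrite !mxE.
apply: measurable_funM; first exact: measurable_cst.
by apply: measurable_funB => //; exact: measurable_cst.
Qed.

Lemma measurable_fun_enorm f :
  (forall i, measurable_fun setT (fun w => f w i 0)) ->
  measurable_fun setT (fun w => enorm (f w)).
Proof.
move=> mf.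
apply: (measurableT_comp (continuous_measurable_fun (@sqrt_continuous R))).
by apply: measurable_sum => i; exact: measurable_funX.
Qed.

Lemma measurable_normr_gt (g : Omega -> R) (M : R) :
  measurable_fun setT g -> measurable [set w | M < `|g w|].
Proof.
move=> mg; rewrite -[X in measurable X]setTI.
have -> : [set w | M < `|g w|] = (fun w => M < `|g w|) @^-1` [set true].
  by apply/seteqP; split => w /=.
by apply: measurable_fun_ltr => //; exact: measurableT_comp.
Qed.

Lemma measurable_coords_eq0 f (J : {set 'I_p}) :
  (forall j, measurable_fun setT (fun w => f w j 0)) ->
  measurable [set w | forall j, j \in J -> f w j 0 = 0].
Proof.
move=> mf.
have -> : [set w | forall j, j \in J -> f w j 0 = 0] =
    \bigcap_(j in [set j | j \in J]) ((fun w => f w j 0) @^-1` [set 0]).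
  by apply/seteqP; split => w /= wJ j /wJ.
apply: fin_bigcap_measurable; first exact: finite_finset.
by move=> j _; rewrite -[X in measurable X]setTI; exact: mf.
Qed.

End Measurability.

Section Probability.
Variables (R : realType) (d : measure_display) (Omega : measurableType d).
Variable P : probability Omega R.

Lemma outerP_lt_cover (X : set Omega) (x : \bar R) : (outerP P X < x)%E ->
  exists2 B, measurable B /\ X `<=` B & (P B < x)%E.
Proof. by case/ereal_inf_lt => _ [B BX <-] PB; exists B. Qed.

Lemma probability_cover_compl (A B C : set Omega) (e1 e2 : R) :
  measurable A -> measurable B -> measurable C -> ~` (A `|` B) `<=` C ->
  (P A < e1%:E)%E -> (P B < e2%:E)%E -> `|fine (P C) - 1| < e1 + e2.
Proof.
move=> mA mB mC ABC PA PB.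
have mAB : measurable (A `|` B) by exact: measurableU.
have finP X : measurable X -> P X = (fine (P X))%:E.
  by move=> mX; rewrite fineK // fin_num_measure.
have PAB : (P (A `|` B) <= P A + P B)%E := measureU2 P mA mB.
have PABC : P (~` (A `|` B)) = (1 - P (A `|` B))%E := probability_setC P mAB.
have PABC_le : (P (~` (A `|` B)) <= P C)%E.
  by apply: le_measure => //; rewrite inE //; exact: measurableC.
have PC1 : (P C <= 1)%E := probability_le1 P mC.
rewrite (finP _ mA) in PA PAB; rewrite (finP _ mB) in PB PAB.
rewrite (finP _ mAB) in PAB PABC; rewrite (finP _ (measurableC mAB)) in PABC PABC_le.
rewrite (finP _ mC) in PABC_le PC1.
move/(congr1 fine): PABC => /= PABC.
move: PA PB PAB PABC_le PC1; rewrite !lte_fin !lee_fin => *.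
rewrite ltr_norml; apply/andP; split; lra.
Qed.

End Probability.

(* Everything at a fixed T and w: H = H_T(w), xi = xi_T(w), a = a_T,
   thetahat = thetahat_T(w), and c plays the role of lambda / 2. *)
Section ZeroCoordinateCompetitor.
Variables (R : realType) (p : nat) (Theta : set 'cV[R]_p).
Variables (thetas thetahat : 'cV[R]_p) (H : 'cV[R]_p -> R).
Variables (xi : 'I_p -> R) (pen : R -> R) (a : 'M[R]_p) (q c r dd M : R).
Hypotheses (xi_gt0 : forall j, 0 < xi j) (q_gt0 : 0 < q).
Hypotheses (pen_ge0 : forall x, 0 <= pen x) (pen0 : pen 0 = 0).
Hypotheses (a_diag : is_diag_mx a) (a_unit : a \in unitmx).
Hypothesis thetahat_in : closure Theta thetahat.
Hypothesis thetahat_max : forall th, closure Theta th ->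
  H th - \sum_(i < p) xi i * pen (th i 0) <=
    H thetahat - \sum_(i < p) xi i * pen (thetahat i 0).
Hypothesis ball_in_Theta :
  forall y : 'cV[R]_p, (forall i, `|y i 0 - thetas i 0| < r) -> Theta y.
Hypothesis pen_ratio_gt : forall x, x != 0 -> `|x| < dd -> c < pen x / `|x| `^ q.
Hypothesis a_small : specnorm a * M < Num.min r dd.

Local Notation u := (invmx a *m (thetahat - thetas)).
Hypothesis u_le : enorm u <= M.

Let J0 := [set j : 'I_p | thetas j 0 == 0]%SET.
Let G := invmx a *m
  diag_mx (\row_(k < p) (if k \in J0 then xi k `^ (- q^-1) else a k k)).

Lemma mulmx_u : a *m u = thetahat - thetas.
Proof. by rewrite mulmxA mulmxV // mul1mx. Qed.

Lemma diag_u_coord i : a i i * u i 0 = thetahat i 0 - thetas i 0.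
Proof. by rewrite -is_diag_mulmxE // mulmx_u !mxE. Qed.

Lemma thetahat_coord_near i : `|thetahat i 0 - thetas i 0| < Num.min r dd.
Proof.
rewrite -diag_u_coord normrM; apply: le_lt_trans a_small.
apply: ler_pM => //; first exact: normr_entry_le_specnorm.
exact: le_trans (normr_coord_le_enorm u i) u_le.
Qed.

Variable j : 'I_p.
Hypothesis thetas_j : thetas j 0 = 0.
Local Notation theta' := (thetas + a *m zero_coord j u).

Lemma theta'_coord i : theta' i 0 = if i == j then 0 else thetahat i 0.
Proof.
rewrite [LHS]mxE is_diag_mulmxE // mxE.
case: eqP => [->|_]; first by rewrite thetas_j mulr0 addr0.
by rewrite diag_u_coord subrKC.
Qed.

Lemma theta'_in : Theta theta'.
Proof.
apply: ball_in_Theta => i; rewrite theta'_coord; case: eqP => [->|_].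
  have := le_lt_trans (normr_ge0 _) (thetahat_coord_near j).
  by rewrite thetas_j subrr normr0 lt_min => /andP[].
by have := thetahat_coord_near i; rewrite lt_min => /andP[].
Qed.

Hypothesis thetahat_j : thetahat j 0 != 0.

Lemma diag_u_j_neq0 : a j j != 0 /\ u j 0 != 0.
Proof.
have := diag_u_coord j; rewrite thetas_j subr0 => x_eq.
by move: thetahat_j; rewrite -x_eq mulf_eq0 negb_or => /andP.
Qed.

Lemma zero_coord_ratio_gt :
  c < `|H thetahat - H theta'| / enorm (u - zero_coord j u) `^ q
        * specnorm (subJJ J0 G) `^ q.
Proof.
have x_eq : thetahat j 0 = a j j * u j 0 by rewrite diag_u_coord thetas_j subr0.
have [ajj0 uj0] := diag_u_j_neq0.
have x_small : `|thetahat j 0| < dd.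
  by have := thetahat_coord_near j; rewrite thetas_j subr0 lt_min => /andP[].
have Gjj : a j j * G j j = xi j `^ (- q^-1).
  rewrite -is_diag_mulmxE // mulmxA mulmxV // mul1mx !mxE eqxx mulr1n.
  by rewrite inE thetas_j eqxx.
have := pen_ratio_gt thetahat_j x_small.
rewrite [in `|thetahat j 0|]x_eq.
rewrite (powR_ratio_rescale _ q_gt0 (xi_gt0 j) ajj0 uj0 Gjj).
move=> /lt_le_trans; apply; rewrite enorm_sub_zero_coord.
apply: ler_pM.
- by rewrite divr_ge0 ?powR_ge0 // mulr_ge0 // ltW.
- exact: powR_ge0.
- apply: ler_wpM2r; first by rewrite invr_ge0 powR_ge0.
  apply: pen_le_fit_diff_zero_coord pen0 _ _ _.
  + exact: thetahat_max (subset_closure theta'_in).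
  + by rewrite theta'_coord eqxx.
  + by move=> i /negbTE ij; rewrite theta'_coord ij.
- have Gjj_le : `|G j j| <= specnorm (subJJ J0 G).
    by apply: normr_diag_le_specnorm_subJJ; rewrite inE thetas_j.
  by apply: ge0_ler_powR; rewrite ?nnegrE ?(le_trans _ Gjj_le) // ltW.
Qed.

Let ratio_sup := ereal_sup
  [set ((`|H (thetas + a *m uv.1) - H (thetas + a *m uv.2)|
          / enorm (uv.1 - uv.2) `^ q) * specnorm (subJJ J0 G) `^ q)%:E
  | uv in [set uv : 'cV[R]_p * 'cV[R]_p |
      [/\ closure Theta (thetas + a *m uv.1), closure Theta (thetas + a *m uv.2),
          enorm uv.1 < M + 1, enorm uv.2 < M + 1 & uv.1 <> uv.2]]].

Lemma zero_coord_ratio_sup_ge : (c%:E <= ratio_sup)%E.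
Proof.
apply: le_trans (ereal_sup_ubound _); last first.
  exists (u, zero_coord j u) => //=; split => /=.
  - by rewrite mulmx_u subrKC.
  - exact: subset_closure theta'_in.
  - by rewrite (le_lt_trans u_le) ?ltrDl.
  - rewrite (le_lt_trans (enorm_zero_coord_le _ _)) //.
    by rewrite (le_lt_trans u_le) ?ltrDl.
  - move=> /(congr1 (fun v : 'cV[R]_p => v j 0)).
    rewrite /= [zero_coord _ _ _ _]mxE eqxx.
    by apply/eqP; case: diag_u_j_neq0.
by rewrite lee_fin mulmx_u subrKC ltW // zero_coord_ratio_gt.
Qed.

End ZeroCoordinateCompetitor.

Unset Implicit Arguments. Set Strict Implicit. Set Printing Implicit Defensive.

Theorem theorem2 (R : realType) (p : nat)
  (Theta : set 'cV[R]_p) (thetas : 'cV[R]_p)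
  (d : measure_display) (Omega : measurableType d) (P : probability Omega R)
  (TT : set R)
  (H : R -> Omega -> 'cV[R]_p -> R)
  (xi : R -> Omega -> 'I_p -> R) (pen : R -> R)
  (thetahat : R -> Omega -> 'cV[R]_p)
  (a : R -> 'M[R]_p) (q : R) :
  open Theta -> bounded_set Theta -> Theta thetas ->
  (forall T, TT T -> 0 <= T) -> (forall M : R, exists T, TT T /\ M < T) ->
  (forall T w, {within closure Theta, continuous (H T w)}) ->
  (forall T w j, 0 < xi T w j) ->
  (forall x, 0 <= pen x) -> pen 0 = 0 ->
  let Hdag := fun T w (th : 'cV[R]_p) =>
    H T w th - \sum_(j < p) xi T w j * pen (th j 0) in
  (forall T j, measurable_fun setT (fun w => thetahat T w j 0)) ->
  (forall T w, closure Theta (thetahat T w)) ->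
  (forall T w th, closure Theta th -> Hdag T w th <= Hdag T w (thetahat T w)) ->
  (forall T, is_diag_mx (a T)) -> (forall T, a T \in unitmx) ->
  cvgT TT (fun T => specnorm (a T)) 0 ->
  0 < q -> q <= 1 ->
  let J0 := [set j : 'I_p | thetas j 0 == 0]%SET in
  let atil := fun T w => diag_mx (\row_(j < p)
     (if j \in J0 then xi T w j `^ (- q^-1) else a T j j)) in
  let G := fun T w => invmx (a T) *m atil T w in
  let U := fun T => [set u : 'cV[R]_p | closure Theta (thetas + a T *m u)] in
  (* [A5] *)
  (exists lam : R, 0 < lam /\
     (fun x => pen x / `|x| `^ q) x @[x --> (0:R)^'] --> lam) ->
  (* [A7] *)
  (forall M : R, 0 < M ->
     cvg0_inprob P TT (fun T w =>
       ereal_sup [set ((`|H T w (thetas + a T *m uv.1) - H T w (thetas + a T *m uv.2)|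
                        / enorm (uv.1 - uv.2) `^ q)
                       * specnorm (subJJ J0 (G T w)) `^ q)%:E
                 | uv in [set uv : 'cV[R]_p * 'cV[R]_p |
                           [/\ U T uv.1, U T uv.2, enorm uv.1 < M,
                               enorm uv.2 < M & uv.1 <> uv.2]]])) ->
  (* uhat_T = a_T^{-1}(thetahat_T - thetas) = O_p(1) *)
  Op1 P TT (fun T w => enorm (invmx (a T) *m (thetahat T w - thetas))) ->
  cvgT TT (fun T => fine (P [set w | forall j, j \in J0 -> thetahat T w j 0 = 0])) 1.
Proof.
move=> oTheta _ Theta_thetas _ _ _ xi_gt0 pen_ge0 pen0 Hdag mthetahat thetahat_in
  thetahat_max a_diag a_unit a_cvg q_gt0 _ J0 atil G U [lam [lam_gt0 A5]] A7 uhat_Op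
  e e_gt0.
have [e2_gt0 lam2_gt0] : 0 < e / 2 /\ 0 < lam / 2 by split; lra.
have /(dnbhs0_gt A5) [dd dd_gt0 pen_ratio_gt] : lam / 2 < lam by lra.
have [r r_gt0 ball_in_Theta] := open_coord_ball oTheta Theta_thetas.
have [T0 [_ [M [M_gt0 uhat_small]]]] := uhat_Op (e / 2) e2_gt0.
have [T1 a_small] : exists T1 : R, forall T, TT T -> T1 <= T ->
    specnorm (a T) * M < Num.min r dd.
  have [|T1 aT] := a_cvg (Num.min r dd / M).
    by rewrite divr_gt0 ?lt_min ?r_gt0.
  exists T1 => T TT_T T1T; rewrite -ltr_pdivlMr // -[specnorm _]subr0.
  exact: le_lt_trans (ler_norm _) (aT T TT_T T1T).
have [T2 ratio_small] :=
  A7 (M + 1) (addr_gt0 M_gt0 ltr01) (lam / 2) lam2_gt0 (e / 2) e2_gt0.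
exists (Num.max T0 (Num.max T1 T2)) => T TT_T.
rewrite !ge_max => /and3P[T0T T1T T2T].
have [B [mB B_cover] PB] := outerP_lt_cover (ratio_small T TT_T T2T).
rewrite [e]splitr; apply: probability_cover_compl mB _ _ (uhat_small T TT_T T0T) PB.
- apply/measurable_normr_gt/measurable_fun_enorm => i.
  exact: measurable_fun_affine_coord.
- exact: measurable_coords_eq0.
move=> w /not_orP[/negP]; rewrite -leNgt ger0_norm ?enorm_ge0 // => uhat_le notB j.
rewrite inE => /eqP thetas_j; apply/eqP; apply: contraT => thetahat_j.
exfalso; apply/notB/B_cover.
apply: le_trans (lee_abs _).
apply: (zero_coord_ratio_sup_ge (r := r) (dd := dd)
  (thetahat := thetahat T w)) => //.
- exact: thetahat_max.
- exact: a_small.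
- exact: thetas_j.
- exact: thetahat_j.
Qed.
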